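(* Consider the $K$-user shared-link broadcast (coded caching) problem with $\Lambda\le K$ shared helper caches of normalized size $\gamma=M/N$, with $N\ge K$ files, under uncoded cache placement, as described in the context. Let $\boldsymbol{\mathcal{L}}=(\mathcal{L}_1,\dots,\mathcal{L}_\Lambda)$ be any user-to-cache association profile (non-negative integers, $\mathcal{L}_1\ge\mathcal{L}_2\ge\dots\ge\mathcal{L}_\Lambda$, $\sum_{\lambda}\mathcal{L}_\lambda=K$). For $i\in\{0,1,\dots,\Lambda\}$ let $$f(i)=\frac{\sum_{r=1}^{\Lambda-i}\mathcal{L}_r\binom{\Lambda-r}{i}}{\binom{\Lambda}{i}},$$ and let $\mathrm{Conv}(f)$ denote the lower convex envelope of the points $\{(i,f(i)) : i\in\{0,1,\dots,\Lambda\}\}$. Then for every $\gamma\in\{\frac{1}{\Lambda},\frac{2}{\Lambda},\dots,1\}$, the optimal worst-case delivery time satisfies $$T^*(\boldsymbol{\mathcal{L}})=\mathrm{Conv}(f)\big|_{i=\Lambda\gamma}.$$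
   Context: Setting: a server has a library of $N$ files $W^1,\dots,W^N$, each of size one unit. There are $K$ users and $\Lambda\le K$ helper caches, each able to store $M\le N$ units; $\gamma=M/N$, and $N\ge K$. Communication has three phases. (a) Cache placement: each cache $\lambda\in[\Lambda]$ stores content $\mathcal{Z}_\lambda$ of size at most $M$ consisting of uncoded pieces (subsets of bits) of the library files (uncoded cache placement); placement is done without knowledge of the later user-to-cache association or of the demands. (b) User-to-cache association: each user is assigned to exactly one cache; this is a partition $\mathcal{U}=\{\mathcal{U}_1,\dots,\mathcal{U}_\Lambda\}$ of $[K]$, where $\mathcal{U}_\lambda$ is the set of users assigned to cache $\lambda$, each of whom has free access to $\mathcal{Z}_\lambda$. Its profile $\boldsymbol{\mathcal{L}}$ is the vector of cardinalities $|\mathcal{U}_\lambda|$ sorted in non-increasing order; $\mathcal{U}_{\boldsymbol{\mathcal{L}}}$ denotes the class of all associations with profile $\boldsymbol{\mathcal{L}}$. (c) Delivery: each user $k$ requests a file $W^{d_k}$, giving a demand vector $\boldsymbol{d}\in[N]^K$; knowing $\boldsymbol{d}$ and $\mathcal{U}$, the server transmits over an error-free shared broadcast link so that every user can decode its requested file from the transmission and the content of its assigned cache. A caching-and-delivery scheme $\chi$ specifies placement and delivery; $T(\mathcal{U},\boldsymbol{d},\chi)$ is the delivery duration, normalized so that one time unit is the time to send one file over the link. The optimal worst-case delivery time of a profile is $T^*(\boldsymbol{\mathcal{L}})=\min_{\chi}\max_{\mathcal{U}\in\mathcal{U}_{\boldsymbol{\mathcal{L}}},\,\boldsymbol{d}\in[N]^K}T(\mathcal{U},\boldsymbol{d},\chi)$,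 the minimum being over schemes with uncoded cache placement. Binomial coefficients $\binom{a}{b}$ with $b>a$ are zero. *)

From mathcomp Require Import all_boot all_order all_algebra.
Set Implicit Arguments. Unset Strict Implicit. Unset Printing Implicit Defensive.
Import Order.TTheory GRing.Theory Num.Theory.
Local Open Scope ring_scope.

(* A library of N files, each consisting of B bits (B bits = one unit). *)
Definition library (N B : nat) := {ffun 'I_N -> {ffun 'I_B -> bool}}.

(* Content of a cache storing (uncoded) the set Z of bits (file, position):
   the stored bits are revealed, all other bits are masked to false. *)
Definition cache_view (N B : nat) (Z : {set 'I_N * 'I_B}) (W : library N B)
  : library N B :=
  [ffun n => [ffun b => ((n, b) \in Z) && W n b]].

Definition assoc (K Lam : nat) := {ffun 'I_K -> 'I_Lam}.
Definition demand (K N : nat) := {ffun 'I_K -> 'I_N}.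

Definition has_profile (K Lam : nat) (L : 'I_Lam -> nat) (a : assoc K Lam) : bool :=
  sort geq [seq #|[set k | a k == l]| | l <- enum 'I_Lam]
  == [seq L l | l <- enum 'I_Lam].

(* A caching-and-delivery scheme with file size B bits: uncoded placement
   (cache lam stores the bits in placement lam, independent of association
   and demands), and for every association a and demand d a transmission of
   msglen a d bits computed from the library. *)
Record scheme (K Lam N B : nat) := Scheme {
  placement : 'I_Lam -> {set 'I_N * 'I_B};
  msglen : assoc K Lam -> demand K N -> nat;
  encode : assoc K Lam -> demand K N -> library N B -> seq bool }.

Definition valid_scheme (K Lam N B : nat) (M : rat) (chi : scheme K Lam N B) : Prop :=
  [/\ forall l, (#|placement chi l|)%:R <= M * B%:R,
      forall a d W, size (encode chi a d W) = msglen chi a d &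
      forall a d (k : 'I_K),
        exists dec : seq bool -> library N B -> {ffun 'I_B -> bool},
          forall W, dec (encode chi a d W) (cache_view (placement chi (a k)) W)
                    = W (d k)].

Definition worst_time (K Lam N B : nat) (L : 'I_Lam -> nat)
  (chi : scheme K Lam N B) : rat :=
  (\max_(a : assoc K Lam | has_profile L a)
     \max_(d : demand K N) msglen chi a d)%N%:R / B%:R.

(* f(i) = (sum_{r=1}^{Lam-i} L_r C(Lam-r, i)) / C(Lam, i), L 0-indexed *)
Definition fprof (Lam : nat) (L : 'I_Lam -> nat) (i : nat) : rat :=
  (\sum_(r < Lam | (r < Lam - i)%N) L r * 'C(Lam - r.+1, i))%N%:R / ('C(Lam, i))%:R.

(* v is the value at x of the lower convex envelope of the points
   (i, g i), i = 0..n : the minimum over convex combinations of the points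
   with abscissa x of the corresponding ordinate. *)
Definition conv_comb (n : nat) (w : 'I_n.+1 -> rat) (x : rat) : Prop :=
  (forall i, 0 <= w i) /\ \sum_(i < n.+1) w i = 1 /\
  \sum_(i < n.+1) w i * (i%:R) = x.

Definition is_lower_conv_env (n : nat) (g : nat -> rat) (x v : rat) : Prop :=
  (exists w, conv_comb w x /\ \sum_(i < n.+1) w i * g i = v) /\
  (forall w, conv_comb w x -> v <= \sum_(i < n.+1) w i * g i).

(* Achievability: split every file into 'C(Lam, t) bits indexed by the
   t-sets of caches, cache l storing the bits whose index contains l. Rank the
   caches by decreasing load and number the users of each cache. For every
   cache mu, number u and t-set T of caches ranked after mu, send the XOR, over
   the users numbered u at the caches of mu |: T, of the bit each of them lacks
   that is indexed by the other t caches. These are sum_r L_r 'C(Lam - r - 1, t)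
   bits, i.e. f(t) files, and f(t) is the value of the envelope at t because f
   is convex on the integers (each i |-> 'C(Lam - i, r + 1) is).

   Converse: for a permutation s of the caches, put the users of the j-th
   largest group at cache s j and let them demand distinct files. Users can
   decode in the order of the positions of their caches, so the transmission
   determines every set of bits that are requested by some user and stored in
   no cache at a position up to that user's: it is at least as long as the
   number of such bits. Averaging over s and over cyclic shifts of the demands,
   a bit stored in i caches is counted Lam! f(i) times, so the delivery time is
   at least sum_i w_i f(i), where w is the distribution of the number of caches
   storing a bit. By the memory constraint the mean of w is at most t, and
   mixing in the point (Lam, f(Lam) = 0) raises it to t. *)

From mathcomp Require Import all_boot all_order all_algebra fingroup perm.
From mathcomp Require Import zify ring lra.
Set Implicit Arguments. Unset Strict Implicit. Unset Printing Implicit Defensive.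
Import Order.TTheory GRing.Theory Num.Theory.

Section Binomials.
Local Open Scope nat_scope.

Lemma bin_sub_mul n q i : 'C(n - q, i) * 'C(n, q) = 'C(n, i) * 'C(n - i, q).
Proof.
have [lt_ni | le_in] := ltnP n i.
  by rewrite !(@bin_small _ i) ?mul0n //; lia.
have [lt_nq | le_qn] := ltnP n q.
  by rewrite !(@bin_small _ q) ?muln0 //; lia.
have [lt_ni_q | le_q_ni] := ltnP (n - i) q.
  by rewrite (@bin_small (n - q) i) ?(@bin_small (n - i) q) ?mul0n ?muln0 //; lia.
have le_i_nq : i <= n - q by lia.
apply/eqP; rewrite -(@eqn_pmul2r (i`! * q`! * (n - q - i)`!)) ?muln_gt0 ?fact_gt0 //.
have := bin_fact le_qn; have := bin_fact le_i_nq.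
have := bin_fact le_in; have := bin_fact le_q_ni.
have -> : n - q - i = n - i - q by lia.
move=> e1 e2 e3 e4; apply/eqP; transitivity n`!.
  by rewrite -e4 -e3; ring.
by rewrite -e2 -e1; ring.
Qed.

Lemma binS_addn_lb b p e : 'C(b, p.+1) + e * 'C(b, p) <= 'C(b + e, p.+1).
Proof.
elim: e => [|e IH]; first by rewrite mul0n !addn0.
rewrite addnS binS mulSn; have := leq_bin2l p (leq_addr e b); lia.
Qed.

Lemma binS_addn_ub a p e : 'C(a + e, p.+1) <= 'C(a, p.+1) + e * 'C(a + e, p).
Proof.
elim: e => [|e IH]; first by rewrite mul0n !addn0.
rewrite addnS binS mulSn.
have le_bin := leq_bin2l p (leqnSn (a + e)).
move: le_bin (leq_mul (leqnn e) le_bin); lia.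
Qed.

Lemma binB_pred_mul n m : ('C(n, m) - 'C(n.-1, m)) * n = m * 'C(n, m).
Proof.
case: n => [|n]; first by case: m => [|m]; rewrite ?subnn ?muln0.
case: m => [|m]; first by rewrite !bin0 subnn.
by rewrite binS addKn mulnC mul_bin_diag.
Qed.

End Binomials.

Section Counting.
Local Open Scope nat_scope.

Lemma card_set_sum (T : finType) (P : pred T) : #|[set x | P x]| = \sum_x P x.
Proof. by rewrite -sum1dep_card big_mkcond; apply: eq_bigr => x _; case: (P x). Qed.

Lemma sum_ord_ltn n m : \sum_(p < n) (p < m) = minn m n.
Proof.
elim: n => [|n IH]; first by rewrite big_ord0; lia.
by rewrite big_ord_recr /= IH; case: ltnP; lia.
Qed.

Lemma sum_ord_geq n m : \sum_(p < n) (m <= p) = n - m.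
Proof.
have : \sum_(p < n) ((m <= p) + (p < m)) = n.
  by rewrite -[RHS]card_ord -sum1_card; apply: eq_bigr => p _; case: leqP.
by rewrite big_split /= sum_ord_ltn; lia.
Qed.

End Counting.

Local Open Scope ring_scope.

(* [a |-> 'C(a, p.+1)] is convex on the integers: it lies above its tangent at [b]. *)
Lemma binS_tangent (a b p : nat) :
  'C(b, p.+1)%:R + (a%:R - b%:R) * 'C(b, p)%:R <= 'C(a, p.+1)%:R :> rat.
Proof.
have [le_ba | lt_ab] := leqP b a.
  have [e ->] : exists e, a = (b + e)%N by exists (a - b)%N; lia.
  rewrite natrD addrAC subrr add0r -natrM -natrD ler_nat.
  exact: binS_addn_lb.
have [e ->] : exists e, b = (a + e)%N by exists (b - a)%N; lia.
have := binS_addn_ub a p e; rewrite -(ler_nat rat) !natrD natrM.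
lra.
Qed.

Section Profile.
Variables (Lam : nat) (L : 'I_Lam -> nat).

Lemma fprofE i :
  fprof L i = (\sum_(r < Lam) L r * 'C(Lam - r.+1, i))%N%:R / 'C(Lam, i)%:R.
Proof.
rewrite /fprof [in RHS](bigID (fun r : 'I_Lam => (r < Lam - i)%N)) /=.
rewrite [X in (_ + X)%N]big1 ?addn0 // => r; rewrite -leqNgt => le_Lami_r.
by rewrite bin_small ?muln0 //; have := ltn_ord r; lia.
Qed.

Lemma fprof_ge0 i : 0 <= fprof L i.
Proof. by rewrite divr_ge0. Qed.

Lemma fprof_Lam : fprof L Lam = 0.
Proof. by rewrite /fprof big1 ?mul0r // => r; rewrite subnn ltn0. Qed.

(* Each term is convex in [i], which is what makes [fprof L] convex. *)
Lemma fprof_dualE i : (i <= Lam)%N ->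
  fprof L i = \sum_(r < Lam) (L r)%:R * 'C(Lam - i, r.+1)%:R / 'C(Lam, r.+1)%:R.
Proof.
move=> le_i_Lam; rewrite fprofE natr_sum mulr_suml; apply: eq_bigr => r _.
have Ci_neq0 : 'C(Lam, i)%:R != 0 :> rat by rewrite pnatr_eq0 -lt0n bin_gt0.
have Cr_neq0 : 'C(Lam, r.+1)%:R != 0 :> rat by rewrite pnatr_eq0 -lt0n bin_gt0.
have := congr1 (GRing.natmul (1 : rat)) (bin_sub_mul Lam r.+1 i); rewrite !natrM => e.
by apply/eqP; rewrite eqr_div // -mulrA e; apply/eqP; ring.
Qed.

Lemma fprof_supporting_line t : (t <= Lam)%N ->
  exists c : rat, forall i : 'I_Lam.+1, fprof L t + (t%:R - i%:R) * c <= fprof L i.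
Proof.
move=> le_t_Lam.
exists (\sum_(r < Lam) (L r)%:R * 'C(Lam - t, r)%:R / 'C(Lam, r.+1)%:R) => i.
have le_i_Lam : (i <= Lam)%N by rewrite -ltnS.
rewrite !fprof_dualE // mulr_sumr -big_split /=; apply: ler_sum => r _.
have := binS_tangent (Lam - i) (Lam - t) r; rewrite !natrB // => tangent.
have weight_ge0 : 0 <= (L r)%:R / 'C(Lam, r.+1)%:R :> rat by rewrite divr_ge0.
have := ler_wpM2l weight_ge0 tangent.
by congr (_ <= _); ring.
Qed.

End Profile.

Section ConvexCombinations.
Variable n : nat.
Implicit Types (w : 'I_n.+1 -> rat) (g : nat -> rat).

Lemma supporting_line_le_conv_comb g (t : nat) (c : rat) w :
  (forall i : 'I_n.+1, g t + (t%:R - i%:R) * c <= g i) ->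
  conv_comb w t%:R -> g t <= \sum_(i < n.+1) w i * g i.
Proof.
move=> above_line [w_ge0 [w_sum1 w_mean]].
apply: le_trans (_ : \sum_i w i * (g t + (t%:R - i%:R) * c) <= _); last first.
  by apply: ler_sum => i _; apply: ler_wpM2l.
have split_term i : w i * (g t + (t%:R - i%:R) * c)
    = g t * w i + (c * t%:R) * w i - c * (w i * i%:R) by ring.
rewrite (eq_bigr _ (fun i _ => split_term i)) sumrB big_split /=.
by rewrite -!mulr_sumr w_sum1 w_mean !mulr1 addrK.
Qed.

Definition mix_max w (al : rat) (i : 'I_n.+1) : rat :=
  (1 - al) * w i + al * (i == ord_max)%:R.

Lemma sum_mix_max w al (h : 'I_n.+1 -> rat) :
  \sum_i mix_max w al i * h i = (1 - al) * \sum_i w i * h i + al * h ord_max.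
Proof.
have -> : al * h ord_max = \sum_i al * (i == ord_max)%:R * h i.
  rewrite (bigD1 ord_max) //= eqxx mulr1 big1 ?addr0 // => i /negbTE ->.
  by rewrite mulr0 mul0r.
rewrite /mix_max (eq_bigr _ (fun i _ => mulrDl _ _ (h i))) big_split /= mulr_sumr.
by congr (_ + _); apply: eq_bigr => i _; rewrite mulrA.
Qed.

Lemma conv_comb_mix_max w x al : conv_comb w x -> 0 <= al <= 1 ->
  conv_comb (mix_max w al) ((1 - al) * x + al * n%:R).
Proof.
move=> [w_ge0 [w_sum1 w_mean]] /andP[al_ge0 al_le1]; split; [|split].
- by move=> i; rewrite addr_ge0 ?mulr_ge0 ?subr_ge0.
- transitivity (\sum_i mix_max w al i * 1); first by apply: eq_bigr => i _; rewrite mulr1.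
  by rewrite sum_mix_max (eq_bigr _ (fun i _ => mulr1 (w i))) w_sum1; ring.
- by rewrite (sum_mix_max w al (fun i => i%:R)) w_mean.
Qed.

(* Mixing in the point [(n, g n) = (n, 0)] moves the mean up to [t] without
   increasing the value. *)
Lemma conv_comb_bound_mean_le g (t : nat) (v x : rat) w :
  (t <= n)%N -> g n = 0 -> (forall i, 0 <= g i) ->
  (forall w', conv_comb w' t%:R -> v <= \sum_(i < n.+1) w' i * g i) ->
  conv_comb w x -> x <= t%:R -> v <= \sum_(i < n.+1) w i * g i.
Proof.
move=> le_tn g_n g_ge0 bound_t cw le_xt.
have [eq_xt | ne_xt] := eqVneq x t%:R; first by apply: bound_t; rewrite -eq_xt.
have lt_xt : x < t%:R by rewrite lt_neqAle ne_xt.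
have le_tn_rat : t%:R <= n%:R :> rat by rewrite ler_nat.
pose al := (t%:R - x) / (n%:R - x).
have al01 : 0 <= al <= 1.
  by rewrite /al divr_ge0 ?ler_pdivrMr /=; lra.
have mean_t : (1 - al) * x + al * n%:R = t%:R.
  have : al * (n%:R - x) = t%:R - x by rewrite divfK // subr_eq0 gt_eqF // (lt_le_trans lt_xt).
  lra.
have := conv_comb_mix_max cw al01; rewrite mean_t => /bound_t.
rewrite (sum_mix_max w al (fun i => g i)) /= g_n mulr0 addr0 => /le_trans; apply.
have sum_ge0 : 0 <= \sum_(i < n.+1) w i * g i.
  by case: cw => w_ge0 _; apply: sumr_ge0 => i _; apply: mulr_ge0.
by rewrite mulrBl mul1r gerDl oppr_le0 mulr_ge0 //; case/andP: al01.
Qed.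

End ConvexCombinations.

Lemma fprof_le_conv_comb Lam (L : 'I_Lam -> nat) (t : nat) w : (t <= Lam)%N ->
  conv_comb w t%:R -> fprof L t <= \sum_(i < Lam.+1) w i * fprof L i.
Proof.
move=> le_t_Lam; have [c above_line] := fprof_supporting_line L le_t_Lam.
exact: supporting_line_le_conv_comb.
Qed.

Section PrefixAvoidance.
Local Open Scope nat_scope.
Variables (n : nat) (S : {set 'I_n}).
Implicit Type s : 'S_n.

Definition prefix_avoids m s : bool := [forall i : 'I_n, (i < m) ==> (s i \notin S)].

Definition count_prefix_avoids m : nat := \sum_(s : 'S_n) prefix_avoids m s.

Lemma prefix_avoidsS m (m0 : 'I_n) s : m0 = m :> nat ->
  prefix_avoids m.+1 s = prefix_avoids m s && (s m0 \notin S).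
Proof.
move=> m0E; apply/forallP/andP => [avoid | [/forallP avoid s_m0] i].
  split; last by apply: (implyP (avoid m0)); rewrite m0E.
  by apply/forallP => i; apply/implyP => lt_im; apply: (implyP (avoid i)); lia.
apply/implyP; rewrite ltnS leq_eqVlt => /orP[/eqP i_m | lt_im].
  by rewrite (_ : i = m0) //; apply: val_inj; rewrite /= i_m m0E.
exact: (implyP (avoid i)).
Qed.

(* Composing with the transposition of [m0] and [p] fixes the first [m] positions. *)
Lemma count_prefix_avoids_at m (m0 p : 'I_n) : m0 = m :> nat -> m <= p ->
  \sum_s (prefix_avoids m s && (s p \notin S)) = count_prefix_avoids m.+1.
Proof.
move=> m0E le_mp; rewrite /count_prefix_avoids (reindex_inj (mulgI (tperm m0 p))) /=.
apply: eq_bigr => s _; rewrite (prefix_avoidsS _ m0E) permM tpermR.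
congr (nat_of_bool (_ && _)).
apply/forallP/forallP => avoid i; apply/implyP => lt_im; have := implyP (avoid i) lt_im;
  rewrite permM tpermD //; apply/eqP => E; move: lt_im; rewrite -E; lia.
Qed.

Lemma sum_free_positions m s : prefix_avoids m s ->
  \sum_(p < n) ((m <= p) && (s p \notin S)) = n - m - #|S|.
Proof.
move=> avoid.
have free_all : \sum_(p < n) (s p \notin S) = n - #|S|.
  have <- : #|~: S| = n - #|S| by rewrite cardsCs setCK card_ord.
  rewrite -card_set_sum -(card_preimset (~: S) (@perm_inj _ s)).
  by apply: eq_card => p; rewrite !inE.
have free_prefix : \sum_(p < n) ((p < m) && (s p \notin S)) = minn m n.
  rewrite -sum_ord_ltn; apply: eq_bigr => p _.
  by case: (ltnP p m) => //= lt_pm; rewrite (implyP (forallP avoid p)).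
have : \sum_(p < n) (s p \notin S) = \sum_(p < n) ((p < m) && (s p \notin S))
         + \sum_(p < n) ((m <= p) && (s p \notin S)).
  by rewrite -big_split; apply: eq_bigr => p _ /=; case: (ltnP p m); rewrite ?addn0.
have := subset_leq_card (subsetT S); rewrite cardsT card_ord.
rewrite free_all free_prefix; lia.
Qed.

Lemma count_prefix_avoidsS m : m < n ->
  (n - m) * count_prefix_avoids m.+1 = (n - m - #|S|) * count_prefix_avoids m.
Proof.
move=> lt_mn; pose m0 := Ordinal lt_mn.
transitivity (\sum_(p < n) \sum_s ((m <= p) && (prefix_avoids m s && (s p \notin S)))).
  rewrite -sum_ord_geq big_distrl /=; apply: eq_bigr => p _.
  case: leqP => [le_mp | _]; last by rewrite mul0n big1.
  by rewrite mul1n -(@count_prefix_avoids_at m m0 p) //; apply: eq_bigr => s _; rewrite le_mp.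
rewrite exchange_big /count_prefix_avoids big_distrr /=; apply: eq_bigr => s _.
case avoid: (prefix_avoids m s); last by rewrite muln0 big1 // => p _; rewrite andbF.
by rewrite muln1 -(sum_free_positions avoid).
Qed.

Lemma count_prefix_avoidsE m : m <= n ->
  count_prefix_avoids m * 'C(n, #|S|) = n`! * 'C(n - m, #|S|).
Proof.
elim: m => [|m IH] le_mn.
  rewrite subn0 /count_prefix_avoids (eq_bigr (fun=> 1)) ?sum1_card ?card_Sn //.
  by move=> s _; apply/eqP; rewrite eqb1; apply/forallP.
apply/eqP; rewrite -(@eqn_pmul2l (n - m)) ?subn_gt0 //; apply/eqP.
rewrite mulnA count_prefix_avoidsS // -mulnA IH 1?ltnW //.
have := mul_bin_down (n - m) #|S|; rewrite (_ : (n - m).-1 = n - m.+1); last by lia.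
by move=> bin_down; rewrite mulnCA -bin_down mulnCA.
Qed.

End PrefixAvoidance.

Section DecodingBound.
Local Open Scope nat_scope.
Variables (K Lam N B : nat) (chi : scheme K Lam N B) (a : assoc K Lam) (d : demand K N).

Hypothesis decodable : forall k : 'I_K,
  exists dec : seq bool -> library N B -> {ffun 'I_B -> bool},
    forall W, dec (encode chi a d W) (cache_view (placement chi (a k)) W) = W (d k).
Hypothesis size_encode : forall W, size (encode chi a d W) = msglen chi a d.

(* The users can decode one after the other in the order [pos]. *)
Variables (pos : 'I_K -> nat) (P : {set 'I_N * 'I_B}).
Hypothesis P_unserved : forall nb, nb \in P -> exists k, d k = nb.1 /\
  forall k', nb \in placement chi (a k') -> pos k < pos k'.

Definition indicator_library (X : {set 'I_N * 'I_B}) : library N B :=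
  [ffun n => [ffun b => (n, b) \in X]].

Lemma encode_indicator_inj : {in powerset P &, injective
  (fun X => encode chi a d (indicator_library X))}.
Proof.
move=> X Y; rewrite !inE => sub_XP sub_YP same_code.
have agree_off_P nb : nb \notin P -> (nb \in X) = (nb \in Y).
  by move=> nbNP; apply/idP/idP => [/(subsetP sub_XP) | /(subsetP sub_YP)] nbP;
    rewrite nbP in nbNP.
have decoded j k : pos k < j ->
    indicator_library X (d k) = indicator_library Y (d k).
  elim: j k => [//|j IH] k; rewrite ltnS => le_kj.
  have same_view : cache_view (placement chi (a k)) (indicator_library X)
                 = cache_view (placement chi (a k)) (indicator_library Y).
    apply/ffunP => n; apply/ffunP => b; rewrite !ffunE.
    case stored: ((n, b) \in _) => //=.
    have [nbP | /agree_off_P //] := boolP ((n, b) \in P).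
    have [k' [d_k' before]] := P_unserved nbP.
    have := IH k' (leq_trans (before k stored) le_kj).
    move=> /(congr1 (fun W : {ffun _ -> bool} => W b)).
    by rewrite /= d_k' !ffunE.
  have [dec decP] := decodable k.
  by rewrite -decP -[RHS]decP same_code same_view.
apply/setP => -[n b]; have [nbP | /agree_off_P //] := boolP ((n, b) \in P).
have [k [d_k _]] := P_unserved nbP.
have := congr1 (fun W : {ffun _ -> bool} => W b) (decoded _ k (ltnSn _)).
by rewrite /= d_k !ffunE.
Qed.

Lemma card_unserved_le_msglen : #|P| <= msglen chi a d.
Proof.
set m := msglen chi a d.
pose code X : {ffun 'I_m -> bool} :=
  [ffun i : 'I_m => nth false (encode chi a d (indicator_library X)) i].
have code_inj : {in powerset P &, injective code}.
  move=> X Y XP YP same_code; apply: encode_indicator_inj => //.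
  apply: (@eq_from_nth _ false); rewrite ?size_encode // => i lt_im.
  have := congr1 (fun c : {ffun 'I_m -> bool} => c (Ordinal lt_im)) same_code.
  by rewrite !ffunE.
rewrite -(leq_exp2l _ _ (ltnSn 1)) -card_powerset -(card_in_imset code_inj).
by apply: leq_trans (max_card _) _; rewrite card_ffun card_bool card_ord.
Qed.

End DecodingBound.

Section Associations.
Local Open Scope nat_scope.
Variables K Lam : nat.
Implicit Type a : assoc K Lam.

Definition load a (l : 'I_Lam) : nat := #|[set k | a k == l]|.

Lemma load_le a l : load a l <= K.
Proof. by rewrite -[K]card_ord max_card. Qed.

Lemma sum_by_cache a (F : 'I_Lam -> nat) : \sum_k F (a k) = \sum_l load a l * F l.
Proof.
rewrite (partition_big a xpredT) //=; apply: eq_bigr => l _.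
by rewrite (eq_bigr (fun=> F l)) ?sum_nat_cond_const // => k /eqP ->.
Qed.

Lemma exists_assoc_load (L : 'I_Lam -> nat) : 0 < Lam -> \sum_l L l = K ->
  exists a, forall l, load a l = L l.
Proof.
move=> Lam_gt0 sumL; pose l0 := Ordinal Lam_gt0.
pose s := flatten [seq nseq (L l) l | l <- enum 'I_Lam].
have size_s : size s = K.
  rewrite size_flatten /shape -map_comp sumnE big_map -sumL big_enum /=.
  by apply: eq_bigr => l _; rewrite /= size_nseq.
exists [ffun k : 'I_K => nth l0 s k] => l.
have <- : count (pred1 l) s = L l.
  rewrite count_flatten -map_comp sumnE big_map big_enum /= (bigD1 l) //=.
  rewrite count_nseq /= eqxx mul1n big1 ?addn0 // => l' ne_l'l.
  by rewrite /= count_nseq /= (negbTE ne_l'l).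
rewrite /load card_set_sum -sum1_count (big_nth l0) size_s big_mkord [RHS]big_mkcond /=.
by apply: eq_bigr => k _; rewrite ffunE; case: (_ == _).
Qed.

Lemma has_profile_perm (L : 'I_Lam -> nat) a (s : 'S_Lam) :
  (forall i j : 'I_Lam, i <= j -> L j <= L i) -> (forall l, load a l = L l) ->
  has_profile L [ffun k => s (a k)].
Proof.
move=> L_noninc loadE; rewrite /has_profile.
have loadsE l : #|[set k | [ffun k => s (a k)] k == l]| = L ((s^-1)%g l).
  rewrite -loadE /load; apply: eq_card => k; rewrite !inE ffunE.
  by apply/eqP/eqP => [<-|->]; rewrite ?permK ?permKV.
have perm_enum : perm_eq (map (s^-1)%g (enum 'I_Lam)) (enum 'I_Lam).
  apply: uniq_perm; rewrite ?enum_uniq ?(map_inj_uniq (@perm_inj _ _)) ?enum_uniq //.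
  by move=> l; rewrite mem_enum; apply/mapP; exists (s l); rewrite ?mem_enum ?permK.
have geq_trans : transitive geq by move=> x y z /= le_xy le_yz; apply: leq_trans le_yz le_xy.
rewrite (eq_map loadsE) map_comp.
have -> : sort geq (map L (map (s^-1)%g (enum 'I_Lam))) = sort geq (map L (enum 'I_Lam)).
  apply/perm_sortP; [by move=> x y; apply: leq_total | exact: geq_trans | | exact: perm_map].
  by move=> x y geq_xy_yx; apply: anti_leq; rewrite andbC.
rewrite sorted_sort // sorted_map.
have : sorted (relpre val leq) (enum 'I_Lam) by rewrite -sorted_map val_enum_ord iota_sorted.
by apply: sub_sorted => x y /=; apply: L_noninc.
Qed.

Definition by_load a : seq 'I_Lam := sort (relpre (load a) geq) (enum 'I_Lam).

Definition rank a (l : 'I_Lam) : nat := index l (by_load a).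

Lemma perm_by_load a : perm_eq (by_load a) (enum 'I_Lam).
Proof. by rewrite /by_load perm_sort. Qed.

Lemma size_by_load a : size (by_load a) = Lam.
Proof. by rewrite size_sort size_enum_ord. Qed.

Lemma mem_by_load a l : l \in by_load a.
Proof. by rewrite mem_sort mem_enum. Qed.

Lemma rank_lt a l : rank a l < Lam.
Proof. by rewrite -[X in _ < X](size_by_load a) index_mem mem_by_load. Qed.

Lemma rank_inj a : injective (rank a).
Proof. by move=> l m; apply: index_inj; rewrite ?mem_by_load. Qed.

Lemma load_rank_mono a l m : rank a m <= rank a l -> load a l <= load a m.
Proof.
move=> le_ml.
have sorted_loads : sorted (relpre (load a) geq) (by_load a).
  by apply: sort_sorted => x y /=; apply: leq_total.
have geq_trans : transitive (relpre (load a) geq).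
  by move=> x y z /= le_xy le_yz; apply: leq_trans le_yz le_xy.
have := sorted_leq_nth geq_trans (fun x => leqnn (load a x)) l sorted_loads.
move=> /(_ (rank a m) (rank a l)); rewrite !inE size_by_load !rank_lt.
by rewrite /rank !nth_index ?mem_by_load //; apply.
Qed.

Lemma sum_by_rank a (F : nat -> nat) : \sum_l F (rank a l) = \sum_(i < Lam) F i.
Proof.
case: (posnP Lam) => [Lam0 | Lam_gt0]; first by rewrite !big1 // => i; have := ltn_ord i; lia.
rewrite -big_enum /= -(perm_big _ (perm_by_load a)) [LHS](big_nth (Ordinal Lam_gt0)).
rewrite size_by_load big_mkord; apply: eq_bigr => i _.
by rewrite /rank index_uniq ?sort_uniq ?enum_uniq ?size_by_load.
Qed.

Lemma sum_load_rank (L : 'I_Lam -> nat) a (F : nat -> nat) : has_profile L a ->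
  \sum_l load a l * F (rank a l) = \sum_(r < Lam) L r * F r.
Proof.
move=> /eqP; rewrite sort_map -/(by_load a) => loads_sorted.
case: (posnP Lam) => [Lam0 | Lam_gt0]; first by rewrite !big1 // => i; have := ltn_ord i; lia.
pose l0 := Ordinal Lam_gt0.
rewrite -big_enum /= -(perm_big _ (perm_by_load a)) [LHS](big_nth l0) size_by_load big_mkord.
apply: eq_bigr => i _; rewrite /rank index_uniq ?sort_uniq ?enum_uniq ?size_by_load //.
congr (_ * _); have /= nth_i := congr1 (fun s => nth 0 s i) loads_sorted.
rewrite -[load a _](nth_map l0 0) ?size_by_load // nth_i (nth_map l0) ?size_enum_ord //.
by rewrite nth_ord_enum.
Qed.

Definition slot a (k : 'I_K) : nat := #|[set k' | (a k' == a k) && (k' < k)]|.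

Lemma slot_lt_load a k : slot a k < load a (a k).
Proof.
apply: proper_card; apply/properP; split.
  by apply/subsetP => k'; rewrite !inE => /andP[].
by exists k; rewrite !inE ?eqxx ?ltnn.
Qed.

Lemma slot_lt a k : slot a k < K.
Proof. exact: leq_trans (slot_lt_load a k) (load_le a (a k)). Qed.

Lemma slot_inj a k k' : a k' = a k -> slot a k' = slot a k -> k' = k.
Proof.
wlog lt_k'k : k k' / k' < k => [wlog_lt a_kk' slot_kk' | a_kk' slot_kk'].
  by case: (ltngtP k' k) => [||/val_inj //] lt; [|symmetry]; apply: wlog_lt.
suff : slot a k' < slot a k by rewrite slot_kk' ltnn.
apply: proper_card; apply/properP; split.
  apply/subsetP => k''; rewrite !inE => /andP[/eqP -> lt_k''k'].
  by rewrite a_kk' eqxx (ltn_trans lt_k''k').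
by exists k'; rewrite !inE ?a_kk' ?eqxx ?ltnn // lt_k'k.
Qed.

End Associations.

Section CodedCaching.
Local Open Scope nat_scope.
Variables K Lam N t : nat.

Definition tsets : {set {set 'I_Lam}} := [set T : {set 'I_Lam} | #|T| == t].

Definition nbits : nat := #|tsets|.

(* Bit [b] of every file is the subfile indexed by the [t]-set of caches [tset b]. *)
Definition tset (b : 'I_nbits) : {set 'I_Lam} := @enum_val _ (pred_of_set tsets) b.

Lemma card_tset b : #|tset b| = t.
Proof. by have := enum_valP b; rewrite inE => /eqP. Qed.

Lemma tset_inj : injective tset.
Proof. exact: enum_val_inj. Qed.

Lemma nbitsE : nbits = 'C(Lam, t).
Proof. by rewrite /nbits /tsets card_draws card_ord. Qed.

Implicit Types (a : assoc K Lam) (d : demand K N) (W : library N nbits).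

Definition subfile W n (T : {set 'I_Lam}) : bool := [exists b, (tset b == T) && W n b].

Lemma subfile_tset W n b : subfile W n (tset b) = W n b.
Proof.
apply/existsP/idP => [[b' /andP[/eqP /tset_inj -> //]] | Wnb].
by exists b; rewrite eqxx.
Qed.

Definition man_placement (l : 'I_Lam) : {set 'I_N * 'I_nbits} := [set nb | l \in tset nb.2].

Lemma subfile_cache_view l W n (T : {set 'I_Lam}) : l \in T ->
  subfile (cache_view (man_placement l) W) n T = subfile W n T.
Proof.
move=> l_T; apply: eq_existsb => b; rewrite !ffunE inE.
by case: eqP => //= ->; rewrite l_T.
Qed.

Lemma card_tset_avoid l : #|[set b | l \notin tset b]| = 'C(Lam.-1, t).
Proof.
transitivity (\sum_(T in tsets) (l \notin T)).
  by rewrite card_set_sum (big_enum_val (fun T : {set 'I_Lam} => nat_of_bool (l \notin T))).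
rewrite -[Lam in 'C(Lam.-1, t)]card_ord -(cardsC1 l) -cards_draws card_set_sum.
rewrite big_mkcond; apply: eq_bigr => T _; rewrite !inE.
have -> : (T \subset [set~ l]) = (l \notin T).
  apply/subsetP/idP => [T_l | lNT l' l'_T]; first by apply/negP => /T_l; rewrite !inE eqxx.
  by rewrite !inE; apply: contraNneq lNT => <-.
by case: (l \notin T); case: (#|T| == t).
Qed.

Lemma card_man_placement l : #|man_placement l| * Lam = N * t * nbits.
Proof.
have -> : man_placement l = setX [set: 'I_N] [set b | l \in tset b].
  by apply/setP => -[n b]; rewrite !inE.
have := cardsC [set b | l \in tset b]; rewrite card_ord.
have -> : ~: [set b | l \in tset b] = [set b | l \notin tset b].
  by apply/setP => b; rewrite !inE.
rewrite cardsX cardsT card_ord card_tset_avoid => /(canRL (addnK _)) ->.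
by rewrite nbitsE -mulnA binB_pred_mul; ring.
Qed.

Definition tx_index : finType := ('I_Lam * 'I_K * {set 'I_Lam})%type.

(* Transmission [(mu, u, T)]: leader cache [mu], slot [u] among the users of
   each cache, and a [t]-set [T] of caches ranked after [mu]. *)
Definition valid_tx a (x : tx_index) : bool :=
  [&& x.1.2 < load a x.1.1, #|x.2| == t & [forall l in x.2, rank a x.1.1 < rank a l]].

Definition tx_indices a : seq tx_index := [seq x <- enum tx_index | valid_tx a x].

Definition tx_bit a d W (x : tx_index) : bool :=
  \big[addb/false]_(k | (a k \in x.1.1 |: x.2) && (slot a k == x.1.2))
     subfile W (d k) ((x.1.1 |: x.2) :\ a k).

Definition man_encode a d W : seq bool := map (tx_bit a d W) (tx_indices a).

Definition man_scheme : scheme K Lam N nbits :=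
  Scheme man_placement (fun a d => size (tx_indices a)) man_encode.

Definition leader a (l : 'I_Lam) (Q : {set 'I_Lam}) : 'I_Lam :=
  [arg min_(mu < l in Q) rank a mu].

Lemma leader_tx_index a k (T : {set 'I_Lam}) : #|T| = t -> a k \notin T ->
  let Q := a k |: T in let mu := leader a (a k) Q in
  mu \in Q /\ (mu, Ordinal (slot_lt a k), Q :\ mu) \in tx_indices a.
Proof.
move=> card_T akNT Q mu; have ak_Q : a k \in Q by rewrite setU11.
have [mu_Q mu_min] : mu \in Q /\ forall l, l \in Q -> rank a mu <= rank a l.
  by rewrite /mu /leader; case: arg_minnP.
split=> //; rewrite mem_filter mem_enum andbT; apply/and3P; split=> /=.
- exact: leq_trans (slot_lt_load a k) (load_rank_mono (mu_min _ ak_Q)).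
- have := cardsD1 mu Q; rewrite mu_Q /Q cardsU1 akNT card_T add1n => /eqP.
  by rewrite eqSS eq_sym.
- apply/forallP => l; apply/implyP; rewrite inE => /andP[l_mu l_Q].
  rewrite ltn_neqAle mu_min // andbT; apply: contra l_mu => /eqP rank_eq.
  by rewrite inE (rank_inj rank_eq).
Qed.

(* A missing bit indexed by [T]
   is recovered from the transmission led by the lowest-ranked cache of
   [a k |: T]: the other terms of that XOR are subfiles stored in cache [a k]. *)
Definition man_decode a d k (X : seq bool) (C : library N nbits) : {ffun 'I_nbits -> bool} :=
  [ffun b => if a k \in tset b then C (d k) b else
     let Q := a k |: tset b in let mu := leader a (a k) Q in
     nth false X (index (mu, Ordinal (slot_lt a k), Q :\ mu) (tx_indices a)) (+)
     \big[addb/false]_(k' | (a k' \in Q) && (slot a k' == slot a k) && (k' != k))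
        subfile C (d k') (Q :\ a k')].

Lemma man_decodeP a d k W :
  man_decode a d k (man_encode a d W) (cache_view (man_placement (a k)) W) = W (d k).
Proof.
apply/ffunP => b; rewrite ffunE /=; case: ifP => [ak_b | akNb].
  by rewrite !ffunE inE ak_b.
have [mu_Q x_tx] := leader_tx_index (card_tset b) (negbT akNb).
set Q := a k |: tset b in mu_Q x_tx *; set mu := leader a (a k) Q in mu_Q x_tx *.
have ak_Q : a k \in Q by rewrite setU11.
rewrite /man_encode (nth_map (mu, Ordinal (slot_lt a k), Q :\ mu)) ?index_mem //.
rewrite nth_index // /tx_bit /= setD1K // (bigD1 k) /=; last by rewrite ak_Q eqxx.
rewrite /Q setU1K ?akNb // subfile_tset -/Q.
set others := \big[addb/false]_(i | _) _; set others_cached := \big[addb/false]_(i | _) _.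
suff -> : others = others_cached by rewrite -addbA addbb addbF.
apply: eq_bigr => k' /andP[/andP[ak'_Q /eqP slot_k'] k'_k].
rewrite subfile_cache_view // in_setD1 ak_Q andbT.
by apply: contraNneq k'_k => ak_ak'; rewrite (slot_inj (esym ak_ak') slot_k').
Qed.

Lemma card_ranked_after a mu :
  #|[set l | rank a mu < rank a l]| = Lam - (rank a mu).+1.
Proof.
by rewrite card_set_sum (sum_by_rank a (fun r => nat_of_bool (rank a mu < r))) sum_ord_geq.
Qed.

Lemma size_tx_indices a :
  size (tx_indices a) = \sum_mu load a mu * 'C(Lam - (rank a mu).+1, t).
Proof.
rewrite size_filter -sum1_count big_enum_cond /= big_mkcond /=.
rewrite -(pair_big xpredT xpredT (fun p T => if valid_tx a (p, T) then 1 else 0)) /=.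
rewrite -(pair_big xpredT xpredT
  (fun mu u => \sum_T if valid_tx a (mu, u, T) then 1 else 0)) /=.
apply: eq_bigr => mu _; set later := [set l | rank a mu < rank a l].
rewrite -card_ranked_after -cards_draws card_set_sum.
transitivity (\sum_(u < K) (u < load a mu) *
                \sum_(T : {set 'I_Lam}) ((T \subset later) && (#|T| == t))).
  apply: eq_bigr => u _; rewrite big_distrr /=; apply: eq_bigr => T _ /=.
  rewrite /valid_tx /=.
  have -> : [forall l in T, rank a mu < rank a l] = (T \subset later).
    apply/forallP/subsetP => T_later l; last by apply/implyP => /T_later; rewrite inE.
    by move=> l_T; rewrite inE; apply: (implyP (T_later l)).
  by case: (u < _); case: (#|T| == t); case: (T \subset _).
by rewrite -big_distrl /= sum_ord_ltn (minn_idPl (load_le a mu)).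
Qed.

End CodedCaching.

Lemma man_scheme_valid K Lam N t : (0 < Lam)%N ->
  valid_scheme ((t%:R / Lam%:R) * N%:R) (man_scheme K Lam N t).
Proof.
move=> Lam_gt0; split=> [l | a d W | a d k];
  last by exists (man_decode a d k) => W; apply: man_decodeP.
- have Lam_neq0 : Lam%:R != 0 :> rat by rewrite pnatr_eq0 -lt0n.
  have -> : #|man_placement N t l|%:R = (N * t * nbits Lam t)%:R / Lam%:R :> rat.
    by rewrite -(card_man_placement N t l) natrM mulfK.
  by rewrite !natrM le_eqVlt; apply/orP; left; apply/eqP; field.
- by rewrite /= size_map.
Qed.

Lemma worst_time_man_scheme_le K Lam N t (L : 'I_Lam -> nat) : (t <= Lam)%N ->
  worst_time L (man_scheme K Lam N t) <= fprof L t.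
Proof.
move=> le_t_Lam; rewrite fprofE -nbitsE /worst_time.
rewrite ler_pM2r ?invr_gt0 ?ltr0n ?nbitsE ?bin_gt0 // ler_nat.
apply/bigmax_leqP => a prof_a; apply/bigmax_leqP => d _.
by rewrite /= size_tx_indices (sum_load_rank (fun r => 'C(Lam - r.+1, t)) prof_a).
Qed.

Lemma fprof_count_prefix_avoids Lam (L : 'I_Lam -> nat) (S : {set 'I_Lam}) :
  (\sum_(j < Lam) L j * count_prefix_avoids S j.+1)%N%:R = Lam`!%:R * fprof L #|S| :> rat.
Proof.
have le_S_Lam : (#|S| <= Lam)%N by rewrite (leq_trans (max_card S)) ?card_ord.
have C_neq0 : 'C(Lam, #|S|)%:R != 0 :> rat by rewrite pnatr_eq0 -lt0n bin_gt0.
rewrite fprofE; apply: (mulIf C_neq0); rewrite -mulrA divfK // -!natrM; congr (_%:R).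
rewrite big_distrl big_distrr /=; apply: eq_bigr => j _.
by rewrite -mulnA count_prefix_avoidsE //; ring.
Qed.

Section Converse.
Variables (K Lam N B t : nat) (L : 'I_Lam -> nat) (chi : scheme K Lam N B).
Hypothesis N_gt0 : (0 < N)%N.
Hypothesis le_KN : (K <= N)%N.

Definition shift_demand (u : 'I_N) : demand K N :=
  [ffun k : 'I_K => Ordinal (ltn_pmod (k + u) N_gt0)].

Lemma shift_demand_inj u : injective (shift_demand u).
Proof.
move=> k k'; rewrite !ffunE => /(congr1 val) /= /eqP.
rewrite eqn_modDr !modn_small ?(leq_trans (ltn_ord _) le_KN) // => /eqP.
exact: val_inj.
Qed.

Lemma shift_demand_inj_shift k : injective (fun u => shift_demand u k).
Proof.
move=> u u'; rewrite !ffunE => /(congr1 val) /= /eqP.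
by rewrite eqn_modDl !modn_small // => /eqP /val_inj.
Qed.

Lemma sum_shift_demand (n : 'I_N) (c : 'I_K -> bool) :
  (\sum_u [exists k, (shift_demand u k == n) && c k] = \sum_k c k)%N.
Proof.
have one_user u : [exists k, (shift_demand u k == n) && c k] =
                  (\sum_k ((shift_demand u k == n) && c k))%N :> nat.
  case: existsP => [[k /andP[/eqP d_k c_k]] | none].
    rewrite (bigD1 k) ?d_k ?eqxx ?c_k //= big1 // => k' ne_k'k.
    by apply/eqP; rewrite eqb0 -d_k (inj_eq (@shift_demand_inj u)) (negbTE ne_k'k).
  by rewrite big1 // => k _; apply/eqP; rewrite eqb0; apply/negP => ?; apply: none; exists k.
rewrite (eq_bigr _ (fun u _ => one_user u)) exchange_big /=; apply: eq_bigr => k _.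
have hits_once : (\sum_u (shift_demand u k == n))%N = 1%N.
  rewrite -card_set_sum -(cards1 n) -(card_preimset [set n] (@shift_demand_inj_shift k)).
  by apply: eq_card => u; rewrite !inE.
case: (c k); last by rewrite big1 // => u _; rewrite andbF.
by rewrite -[RHS]hits_once; apply: eq_bigr => u _; rewrite andbT.
Qed.

Definition replicas (nb : 'I_N * 'I_B) : {set 'I_Lam} := [set l | nb \in placement chi l].

Definition worst_msglen : nat :=
  (\max_(a : assoc K Lam | has_profile L a) \max_(d : demand K N) msglen chi a d)%N.

Hypothesis chi_valid : valid_scheme ((t%:R / Lam%:R) * N%:R) chi.
Hypothesis L_noninc : forall i j : 'I_Lam, (i <= j)%N -> (L j <= L i)%N.
Variable a0 : assoc K Lam.
Hypothesis load_a0 : forall l, load a0 l = L l.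

(* Place the users of the [j]-th group of [a0] at cache [s j] and let them
   demand distinct files; a bit is unserved if some user requests it while no
   cache at a position up to that user's stores it. *)
Definition unserved (s : 'S_Lam) (u : 'I_N) : {set 'I_N * 'I_B} :=
  [set nb | [exists k, (shift_demand u k == nb.1) && prefix_avoids (replicas nb) (a0 k).+1 s]].

Lemma card_unserved_le s u : (#|unserved s u| <= worst_msglen)%N.
Proof.
have [_ size_chi chi_decodable] := chi_valid.
pose a : assoc K Lam := [ffun k => s (a0 k)].
apply: (@leq_trans (msglen chi a (shift_demand u))).
  apply: (card_unserved_le_msglen (chi_decodable a _) (size_chi a _) (pos := fun k => a0 k)).
  move=> nb; rewrite inE => /existsP[k /andP[/eqP d_k avoid]].
  exists k; split=> // k'; rewrite ffunE => stored; rewrite ltnNge; apply/negP => le_k'k.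
  by have := implyP (forallP avoid (a0 k')); rewrite ltnS inE stored => /(_ le_k'k).
apply: leq_trans (leq_bigmax_cond _ (has_profile_perm s L_noninc load_a0)).
exact: (leq_bigmax (F := fun d => msglen chi a d)).
Qed.

Lemma sum_card_unserved :
  (\sum_(s : 'S_Lam) \sum_u #|unserved s u|)%N%:R
  = Lam`!%:R * \sum_nb fprof L #|replicas nb| :> rat.
Proof.
rewrite mulr_sumr -(eq_bigr _ (fun nb _ => fprof_count_prefix_avoids L (replicas nb))).
rewrite -natr_sum; congr (_%:R).
transitivity (\sum_(s : 'S_Lam) \sum_nb \sum_(j < Lam)
                L j * prefix_avoids (replicas nb) j.+1 s)%N.
  apply: eq_bigr => s _; rewrite /unserved (eq_bigr _ (fun u _ => card_set_sum _)).
  rewrite exchange_big /=; apply: eq_bigr => nb _.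
  rewrite sum_shift_demand (sum_by_cache a0 (fun j => nat_of_bool (prefix_avoids _ j.+1 s))).
  by apply: eq_bigr => j _; rewrite load_a0.
rewrite exchange_big /=; apply: eq_bigr => nb _; rewrite exchange_big /=.
by apply: eq_bigr => j _; rewrite /count_prefix_avoids big_distrr.
Qed.

Lemma sum_fprof_replicas_le :
  \sum_nb fprof L #|replicas nb| <= (N * worst_msglen)%N%:R.
Proof.
rewrite -(ler_pM2l (_ : 0 < Lam`!%:R)) ?ltr0n ?fact_gt0 // -sum_card_unserved.
rewrite -natrM ler_nat -[N in (_ * (N * _))%N]card_ord -[Lam`!]card_Sn.
rewrite -!sum_nat_const; apply: leq_sum => s _; apply: leq_sum => u _.
exact: card_unserved_le.
Qed.

Definition replication_weights (i : 'I_Lam.+1) : rat :=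
  #|[set nb | #|replicas nb| == i]|%:R / (N * B)%:R.

Lemma sum_replication_weights (g : nat -> rat) :
  \sum_i replication_weights i * g i = (\sum_nb g #|replicas nb|) / (N * B)%:R.
Proof.
have le_rep_Lam nb : (#|replicas nb| < Lam.+1)%N.
  by rewrite ltnS (leq_trans (max_card _)) ?card_ord.
have split_g nb : g #|replicas nb| = \sum_(i < Lam.+1) (#|replicas nb| == i)%:R * g i.
  rewrite (bigD1 (Ordinal (le_rep_Lam nb))) //= eqxx mul1r big1 ?addr0 // => i ne_i.
  rewrite (_ : (#|replicas nb| == i) = false) ?mul0r //.
  by apply: contraNF ne_i => /eqP rep_i; apply/eqP/val_inj.
rewrite (eq_bigr _ (fun nb _ => split_g nb)) exchange_big /= mulr_suml.
apply: eq_bigr => i _; rewrite /replication_weights mulrAC -mulr_suml card_set_sum natr_sum.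
by congr (_ / _); apply: eq_bigr => nb _.
Qed.

Lemma replication_conv_comb : (0 < B)%N ->
  conv_comb replication_weights ((\sum_nb #|replicas nb|%:R) / (N * B)%:R).
Proof.
move=> B_gt0; split; [|split].
- by move=> i; rewrite divr_ge0.
- rewrite -(eq_bigr _ (fun i _ => mulr1 (replication_weights i))).
  rewrite (sum_replication_weights (fun _ => 1)) sumr_const card_prod !card_ord.
  by rewrite divff // pnatr_eq0 -lt0n muln_gt0 N_gt0.
- exact: (sum_replication_weights (fun i => i%:R)).
Qed.

Lemma mean_replication_le : (0 < Lam)%N -> (0 < B)%N ->
  (\sum_nb #|replicas nb|%:R) / (N * B)%:R <= t%:R :> rat.
Proof.
move=> Lam_gt0 B_gt0; have [fits _ _] := chi_valid.
have sum_replicas : (\sum_nb #|replicas nb| = \sum_l #|placement chi l|)%N.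
  rewrite (eq_bigr _ (fun nb _ => card_set_sum _)) exchange_big /=; apply: eq_bigr => l _.
  by rewrite -sum1_card [RHS]big_mkcond.
rewrite -natr_sum sum_replicas natr_sum ler_pdivrMr ?ltr0n ?muln_gt0 ?N_gt0 //.
apply: le_trans (ler_sum _ (fun l _ => fits l)) _.
rewrite sumr_const card_ord -mulr_natr natrM le_eqVlt; apply/orP; left; apply/eqP.
by field; rewrite pnatr_eq0 -lt0n.
Qed.

End Converse.

Lemma converse K Lam N B t (L : 'I_Lam -> nat) (chi : scheme K Lam N B) (v : rat) :
  (0 < Lam)%N -> (Lam <= K)%N -> (K <= N)%N -> (t <= Lam)%N -> (0 < B)%N ->
  (forall i j : 'I_Lam, (i <= j)%N -> (L j <= L i)%N) -> (\sum_l L l)%N = K ->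
  valid_scheme ((t%:R / Lam%:R) * N%:R) chi ->
  (forall w, conv_comb w t%:R -> v <= \sum_(i < Lam.+1) w i * fprof L i) ->
  v <= worst_time L chi.
Proof.
move=> Lam_gt0 le_Lam_K le_KN le_t_Lam B_gt0 L_noninc sum_L chi_valid env_bound.
have N_gt0 : (0 < N)%N by apply: leq_trans le_KN; apply: leq_trans le_Lam_K.
have [a0 load_a0] := exists_assoc_load Lam_gt0 sum_L.
have := conv_comb_bound_mean_le le_t_Lam (fprof_Lam L) (fprof_ge0 L) env_bound
  (replication_conv_comb chi N_gt0 B_gt0) (mean_replication_le N_gt0 chi_valid Lam_gt0 B_gt0).
rewrite sum_replication_weights => /le_trans; apply.
have inv_NB_ge0 : 0 <= (N * B)%N%:R^-1 :> rat by rewrite invr_ge0.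
have := sum_fprof_replicas_le N_gt0 le_KN chi_valid L_noninc load_a0.
move=> /(ler_wpM2r inv_NB_ge0) /le_trans; apply.
rewrite /worst_time !natrM invfM mulrA (mulrC N%:R) mulfK //.
by rewrite pnatr_eq0 -lt0n.
Qed.

Theorem theorem1 (K Lam N : nat) (L : 'I_Lam -> nat) (t : nat) (v : rat) :
  (0 < Lam)%N -> (Lam <= K)%N -> (K <= N)%N ->
  (forall i j : 'I_Lam, (i <= j)%N -> (L j <= L i)%N) ->
  (\sum_(l < Lam) L l)%N = K ->
  (1 <= t <= Lam)%N ->
  is_lower_conv_env Lam (fprof L) ((t%:R / Lam%:R) * Lam%:R) v ->
  let M : rat := (t%:R / Lam%:R) * N%:R in
  (* T*(L) = v : v is attained by some scheme, and no scheme does better *)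
  (exists (B : nat) (chi : scheme K Lam N B),
      (0 < B)%N /\ valid_scheme M chi /\ worst_time L chi = v) /\
  (forall (B : nat) (chi : scheme K Lam N B),
      (0 < B)%N -> valid_scheme M chi -> v <= worst_time L chi).
Proof.
move=> Lam_gt0 le_Lam_K le_KN L_noninc sum_L /andP[_ le_t_Lam] env M.
rewrite divfK ?pnatr_eq0 -?lt0n // in env; case: env => [[w [w_conv w_v]] env_bound].
have lower (B : nat) (chi : scheme K Lam N B) :
    (0 < B)%N -> valid_scheme M chi -> v <= worst_time L chi.
  move=> B_gt0 chi_valid.
  exact: (converse Lam_gt0 le_Lam_K le_KN le_t_Lam B_gt0 L_noninc sum_L chi_valid).
split=> //; exists (nbits Lam t), (man_scheme K Lam N t).
have nbits_gt0 : (0 < nbits Lam t)%N by rewrite nbitsE bin_gt0.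
have man_valid := man_scheme_valid K N t Lam_gt0.
do 2!split=> //; apply/le_anti; rewrite lower // andbT.
apply: le_trans (worst_time_man_scheme_le K N L le_t_Lam) _.
by rewrite -w_v fprof_le_conv_comb.
Qed.
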